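(* Let $n,m\ge1$, $r>0$, let $\varphi_1,\dots,\varphi_n:\mathbb{R}\to[0,\infty)$ be nonnegative functions and $x_1,\dots,x_m\in\mathbb{R}$ such that for each $j$ there is $i$ with $\varphi_i(x_j)>0$. Set $v^1_i=\sqrt{r/n}$ for $i=1,\dots,n$. For $k\ge1$, given $v^k\in[0,\infty)^n$, let $u^k\in[0,\infty)^n$ with $\sum_i(u^k_i)^2=r$ be a point at which $\widehat l^{\,k}(u)=\prod_{j=1}^m\big(\sum_{i=1}^n u_iv^k_i\varphi_i(x_j)\big)$ attains its maximum over the sphere $\{u\in\mathbb{R}^n:\sum_iu_i^2=r\}$; let $\overline\theta^{k+1}>0$ satisfy $(\overline\theta^{k+1})^2\sum_i u^k_iv^k_i=r$ and set $v^{k+1}_i=\overline\theta^{k+1}\sqrt{u^k_iv^k_i}$. Let $w^k_i=|u^k_i-v^k_i|$. Then $\lim_{k\to\infty}w^k_i=0$ for every $i=1,\dots,n$. *)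

From HB Require Import structures.
From mathcomp Require Import all_boot all_order all_algebra.
From mathcomp Require Import all_classical all_reals all_analysis.
Set Implicit Arguments. Unset Strict Implicit. Unset Printing Implicit Defensive.
Import Order.TTheory GRing.Theory Num.Theory.
Local Open Scope ring_scope.

Definition lhat (R : realType) (n m : nat) (phi : 'I_n -> R -> R)
  (x : 'I_m -> R) (v u : 'I_n -> R) : R :=
  \prod_(j < m) \sum_(i < n) u i * v i * phi i (x j).

Definition on_sphere (R : realType) (n : nat) (r : R) (u : 'I_n -> R) : Prop :=
  \sum_(i < n) u i ^+ 2 = r.

(** The sequence [G k := lhat (v k) (v k)] is nondecreasing and bounded.
    With [S := <u^k, v^k>] we have [theta^2 S = r], and since [v^(k+1)_i^2] is
    [theta^2 u^k_i v^k_i], substituting into [lhat] gives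
    [G (k+1) = theta^(2m) lhat_{v^k}(u^k) >= theta^2 G k], the inequality
    coming from the maximality of [u^k] (tested against [v^k]).  On the other
    hand [|u^k - v^k|^2 = 2 (r - S) = 2 S (theta^2 - 1) <= 2 r (theta^2 - 1)],
    and [theta^2 - 1 <= (G (k+1) - G k) / G 1].  The increments of a convergent
    sequence tend to [0], hence so does [w^k_i]. *)
From HB Require Import structures.
From mathcomp Require Import all_boot all_order all_algebra.
From mathcomp Require Import all_classical all_reals all_analysis.
From mathcomp Require Import ring lra.
Set Implicit Arguments.
Unset Strict Implicit.
Unset Printing Implicit Defensive.
Import Order.TTheory GRing.Theory Num.Theory.
Import numFieldNormedType.Exports.
Local Open Scope classical_set_scope.
Local Open Scope ring_scope.

Section Sphere.
Variables (R : realType) (n : nat) (r : R).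

Lemma sphere_sum_sqrB (u w : 'I_n -> R) : on_sphere r u -> on_sphere r w ->
  \sum_(i < n) (u i - w i) ^+ 2 = (r - \sum_(i < n) u i * w i) *+ 2.
Proof.
move=> su sw.
transitivity (\sum_(i < n) (u i ^+ 2 + w i ^+ 2 - (u i * w i) *+ 2)).
  by apply: eq_bigr => i _; rewrite sqrrB; ring.
by rewrite sumrB big_split /= sumrMnl su sw; ring.
Qed.

Lemma sqr_le_sum_sqr (f : 'I_n -> R) (i : 'I_n) :
  f i ^+ 2 <= \sum_(l < n) f l ^+ 2.
Proof. by rewrite (bigD1 i) //= lerDl sumr_ge0 // => l _; apply: sqr_ge0. Qed.

Lemma sphere_sqrB_le (u w : 'I_n -> R) (i : 'I_n) :
  on_sphere r u -> on_sphere r w ->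
  (u i - w i) ^+ 2 <= (r - \sum_(l < n) u l * w l) *+ 2.
Proof.
move=> su sw; rewrite -sphere_sum_sqrB //.
exact: (sqr_le_sum_sqr (fun l => u l - w l)).
Qed.

Lemma sphere_dot_le (u w : 'I_n -> R) : on_sphere r u -> on_sphere r w ->
  \sum_(l < n) u l * w l <= r.
Proof.
move=> su sw; rewrite -subr_ge0 -(pmulrn_lge0 _ (isT : (0 < 2)%N)).
by rewrite -sphere_sum_sqrB // sumr_ge0 // => l _; apply: sqr_ge0.
Qed.

Lemma sphere_sqr_le (u : 'I_n -> R) (i : 'I_n) : on_sphere r u -> u i ^+ 2 <= r.
Proof. by move=> <-; apply: sqr_le_sum_sqr. Qed.

End Sphere.

Section Lhat.
Variables (R : realType) (n m : nat) (phi : 'I_n -> R -> R) (x : 'I_m -> R).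
Hypothesis phi_ge0 : forall i t, 0 <= phi i t.

Lemma lhat_ge0 (v u : 'I_n -> R) :
  (forall i, 0 <= v i) -> (forall i, 0 <= u i) -> 0 <= lhat phi x v u.
Proof.
move=> v_ge0 u_ge0; apply: prodr_ge0 => j _; apply: sumr_ge0 => i _.
by rewrite !mulr_ge0.
Qed.

Lemma lhat_geometric_mean (v u w : 'I_n -> R) (t : R) :
  (forall i, 0 <= v i) -> (forall i, 0 <= u i) ->
  (forall i, w i = t * Num.sqrt (u i * v i)) ->
  lhat phi x w w = (t ^+ 2) ^+ m * lhat phi x v u.
Proof.
move=> v_ge0 u_ge0 w_def.
rewrite /lhat -[m in _ ^+ m]card_ord -prodr_const -big_split /=.
apply: eq_bigr => j _; rewrite mulr_sumr; apply: eq_bigr => i _.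
rewrite w_def mulrACA -expr2 -[Num.sqrt _ * _]expr2 sqr_sqrtr ?mulr_ge0 //.
by ring.
Qed.

Lemma lhat_diag_le_sphere (r : R) (v : 'I_n -> R) :
  (forall i, 0 <= v i) -> on_sphere r v ->
  lhat phi x v v <= \prod_(j < m) \sum_(i < n) r * phi i (x j).
Proof.
move=> v_ge0 sv; apply: ler_prod => j _; apply/andP; split.
  by apply: sumr_ge0 => i _; rewrite !mulr_ge0.
apply: ler_sum => i _; apply: ler_wpM2r => //.
by rewrite -expr2; apply: sphere_sqr_le.
Qed.

Lemma lhat_const_gt0 (c : R) (v : 'I_n -> R) :
  c != 0 -> (forall i, v i = c) ->
  (forall j, exists i, 0 < phi i (x j)) -> 0 < lhat phi x v v.
Proof.
move=> c_neq0 v_const phi_cover; apply: prodr_gt0 => j _.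
have [i phi_gt0] := phi_cover j.
have c2_gt0 : 0 < c * c by rewrite -expr2 exprn_even_gt0.
rewrite (bigD1 i) //= !v_const ltr_pwDl ?(mulr_gt0 c2_gt0 phi_gt0) //.
by apply: sumr_ge0 => l _; rewrite v_const mulr_ge0 // ltW.
Qed.

End Lhat.

Lemma cvg0_of_le_increments (R : realType) (G a : R ^nat) (c : R) :
  nondecreasing_seq G -> has_ubound (range G) ->
  (forall k, 0 <= a k <= c * (G k.+1 - G k)) -> a @ \oo --> 0.
Proof.
move=> G_nd G_ub a_bound.
have G_cvg := nondecreasing_cvgn G_nd G_ub.
have incr_cvg0 : (fun k => c * (G k.+1 - G k)) @ \oo --> 0.
  rewrite -(mulr0 c) -(subrr (sup (range G))).
  apply: cvgMl_tmp; apply: cvgB => //.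
  by rewrite (cvg_shiftS G).
apply: (squeeze_cvgr _ (cvg_cst 0) incr_cvg0).
exact: nearW.
Qed.

Lemma cvg0_norm_of_sqr (R : realType) (f : R ^nat) :
  (fun k => f k ^+ 2) @ \oo --> 0 -> (fun k => `|f k|) @ \oo --> 0.
Proof.
move=> sqr_cvg0.
have -> : (fun k => `|f k|) = Num.sqrt \o (fun k => f k ^+ 2).
  by apply: funext => k /=; rewrite sqrtr_sqr.
rewrite -(sqrtr0 R); apply: continuous_cvg => //; exact: sqrt_continuous.
Qed.

Section Iteration.
Variables (R : realType) (n m : nat) (r : R) (phi : 'I_n -> R -> R)
  (x : 'I_m -> R) (u v : nat -> 'I_n -> R) (theta : nat -> R).
Hypotheses (n_gt0 : (0 < n)%N) (m_gt0 : (0 < m)%N) (r_gt0 : 0 < r)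
  (phi_ge0 : forall i t, 0 <= phi i t)
  (phi_cover : forall j : 'I_m, exists i : 'I_n, 0 < phi i (x j))
  (v_init : forall i, v 1%N i = Num.sqrt (r / n%:R))
  (u_argmax : forall k : nat, (1 <= k)%N ->
     [/\ forall i, 0 <= u k i,
         on_sphere r (u k) &
         forall w : 'I_n -> R, on_sphere r w ->
           lhat phi x (v k) w <= lhat phi x (v k) (u k)])
  (v_next : forall k : nat, (1 <= k)%N ->
     [/\ 0 < theta k.+1,
         theta k.+1 ^+ 2 * (\sum_(i < n) u k i * v k i) = r &
         forall i, v k.+1 i = theta k.+1 * Num.sqrt (u k i * v k i)]).

Let G k := lhat phi x (v k) (v k).

Lemma iterate_v_ge0_on_sphere k :
  (1 <= k)%N -> (forall i, 0 <= v k i) /\ on_sphere r (v k).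
Proof.
elim: k => [//|[_ _|k IH _]].
  have rn_ge0 : 0 <= r / n%:R by rewrite divr_ge0 ?ler0n // ltW.
  split=> [i|]; first by rewrite v_init sqrtr_ge0.
  rewrite /on_sphere (eq_bigr (fun _ => r / n%:R)); last first.
    by move=> i _; rewrite v_init sqr_sqrtr.
  by rewrite sumr_const card_ord -[_ *+ n]mulr_natr divfK // pnatr_eq0 -lt0n.
have [v_ge0 v_sphere] := IH isT.
have [u_ge0 _ _] := @u_argmax k.+1 isT.
have [theta_gt0 theta_dot v_def] := @v_next k.+1 isT.
split=> [i|]; first by rewrite v_def mulr_ge0 ?sqrtr_ge0 // ltW.
rewrite /on_sphere -theta_dot mulr_sumr; apply: eq_bigr => i _.
by rewrite v_def exprMn sqr_sqrtr // mulr_ge0.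
Qed.

Lemma iterate_dot_bounds k : (1 <= k)%N ->
  0 <= \sum_(i < n) u k i * v k i <= r.
Proof.
move=> k_ge1; have [u_ge0 u_sphere _] := u_argmax k_ge1.
have [v_ge0 v_sphere] := iterate_v_ge0_on_sphere k_ge1.
rewrite sphere_dot_le // andbT.
by apply: sumr_ge0 => i _; apply: mulr_ge0.
Qed.

Lemma iterate_theta_sqr_ge1 k : (1 <= k)%N -> 1 <= theta k.+1 ^+ 2.
Proof.
move=> k_ge1; have [_ theta_dot _] := v_next k_ge1.
have /andP[dot_ge0 dot_le] := iterate_dot_bounds k_ge1.
set S := \sum_(i < n) _ in theta_dot dot_ge0 dot_le.
have S_gt0 : 0 < S.
  by rewrite lt_neqAle dot_ge0 andbT; apply: contraTneq r_gt0 => S0;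
    rewrite -theta_dot -S0 mulr0 ltxx.
by rewrite -(ler_pM2r S_gt0) mul1r theta_dot.
Qed.

Lemma iterate_dist_sqr_le k i : (1 <= k)%N ->
  (u k i - v k i) ^+ 2 <= r *+ 2 * (theta k.+1 ^+ 2 - 1).
Proof.
move=> k_ge1; have [_ u_sphere _] := u_argmax k_ge1.
have [_ v_sphere] := iterate_v_ge0_on_sphere k_ge1.
have [_ theta_dot _] := v_next k_ge1.
have /andP[dot_ge0 dot_le] := iterate_dot_bounds k_ge1.
have theta_ge1 := iterate_theta_sqr_ge1 k_ge1.
apply: (le_trans (sphere_sqrB_le i u_sphere v_sphere)).
rewrite -theta_dot !mulr2n; nra.
Qed.

Lemma iterate_G_ge0 k : (1 <= k)%N -> 0 <= G k.
Proof. by move=> /iterate_v_ge0_on_sphere[v_ge0 _]; apply: lhat_ge0. Qed.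

Lemma iterate_G1_gt0 : 0 < G 1.
Proof.
apply: lhat_const_gt0 => //; rewrite sqrtr_eq0 -ltNge.
by rewrite divr_gt0 ?ltr0n.
Qed.

Lemma iterate_G_step k : (1 <= k)%N -> theta k.+1 ^+ 2 * G k <= G k.+1.
Proof.
move=> k_ge1; have [u_ge0 _ u_max] := u_argmax k_ge1.
have [v_ge0 v_sphere] := iterate_v_ge0_on_sphere k_ge1.
have [_ _ v_def] := v_next k_ge1.
have theta_ge1 := iterate_theta_sqr_ge1 k_ge1.
rewrite /G (lhat_geometric_mean phi x v_ge0 u_ge0 v_def).
apply: ler_pM; first exact: le_trans ler01 theta_ge1.
- exact: iterate_G_ge0.
- exact: ler_eXnr.
- exact: u_max.
Qed.

Lemma iterate_G_nondecreasing k : (1 <= k)%N -> G k <= G k.+1.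
Proof.
move=> k_ge1; apply: le_trans (iterate_G_step k_ge1).
by rewrite ler_peMl ?iterate_G_ge0 ?iterate_theta_sqr_ge1.
Qed.

Lemma iterate_G_ge_G1 k : (1 <= k)%N -> G 1 <= G k.
Proof.
elim: k => [//|[//|k IH] _].
exact: le_trans (IH isT) (@iterate_G_nondecreasing k.+1 isT).
Qed.

Lemma iterate_G_bounded k : (1 <= k)%N ->
  G k <= \prod_(j < m) \sum_(i < n) r * phi i (x j).
Proof.
by move=> /iterate_v_ge0_on_sphere[v_ge0 v_sphere]; apply: lhat_diag_le_sphere.
Qed.

(* [G k >= G 1] turns the multiplicative gain [theta^2] into an additive one. *)
Lemma iterate_dist_sqr_le_increment k i : (1 <= k)%N ->
  (u k i - v k i) ^+ 2 <= r *+ 2 / G 1 * (G k.+1 - G k).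
Proof.
move=> k_ge1; apply: le_trans (iterate_dist_sqr_le i k_ge1) _.
rewrite -mulrA ler_pM2l ?pmulrn_lgt0 // mulrC ler_pdivlMr ?iterate_G1_gt0 //.
have := iterate_G_step k_ge1; have := iterate_G_ge_G1 k_ge1.
have := iterate_theta_sqr_ge1 k_ge1; nra.
Qed.

Theorem iterate_dist_cvg0 i : (fun k => `|u k i - v k i|) @ \oo --> 0.
Proof.
apply: cvg0_norm_of_sqr; rewrite -(cvg_shiftS (fun k => (u k i - v k i) ^+ 2)).
apply: (@cvg0_of_le_increments _ (fun k => G k.+1) _ (r *+ 2 / G 1)).
- by apply/nondecreasing_seqP => k; apply: iterate_G_nondecreasing.
- by exists (\prod_(j < m) \sum_(l < n) r * phi l (x j)) => _ [k _ <-];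
    apply: iterate_G_bounded.
- move=> k; rewrite sqr_ge0; exact: iterate_dist_sqr_le_increment.
Qed.

End Iteration.

Theorem lemma8 (R : realType) (n m : nat) (r : R)
  (phi : 'I_n -> R -> R) (x : 'I_m -> R)
  (u v : nat -> 'I_n -> R) (theta : nat -> R) :
  (0 < n)%N -> (0 < m)%N -> 0 < r ->
  (forall i t, 0 <= phi i t) ->
  (forall j : 'I_m, exists i : 'I_n, 0 < phi i (x j)) ->
  (forall i, v 1%N i = Num.sqrt (r / n%:R)) ->
  (forall k : nat, (1 <= k)%N ->
     [/\ forall i, 0 <= u k i,
         on_sphere r (u k) &
         forall w : 'I_n -> R, on_sphere r w ->
           lhat phi x (v k) w <= lhat phi x (v k) (u k)]) ->
  (forall k : nat, (1 <= k)%N ->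
     [/\ 0 < theta k.+1,
         theta k.+1 ^+ 2 * (\sum_(i < n) u k i * v k i) = r &
         forall i, v k.+1 i = theta k.+1 * Num.sqrt (u k i * v k i)]) ->
  forall i : 'I_n, (fun k : nat => `|u k i - v k i| : R) @ \oo --> 0.
Proof. exact: iterate_dist_cvg0. Qed.
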